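(* The values of $h$ satisfy $(h(1),h(2),\dots,h(8))=(0,1,1,1,2,2,1,1)$, and for every integer $n>8$: $h(n)=h(n/2)$ if $n\equiv0\pmod 4$; $h(n)=h(n/2)+1$ if $n\equiv 2\pmod 4$; $h(n)=h((n+1)/2)$ if $n\equiv1\pmod 8$; $h(n)=h((n-1)/2)+1$ if $n\equiv 3\pmod 8$; $h(n)=h((n+1)/2)+1$ if $n\equiv5\pmod 8$; $h(n)=h((n-1)/2)$ if $n\equiv 7\pmod 8$.
   Context: For $k\ge0$ and $0\le m<2^k$ let $\beta_k(m)\in\{0,1\}^k$ be the point whose $j$-th coordinate is the binary digit of $m$ of weight $2^{k-j}$. For $n\ge2$ with $k=\lceil\log_2 n\rceil$, a pair $(n_0,n_1)$ of integers with $n=n_0+n_1$, $n_0\ge n_1\ge1$ is a hypercubic bipartition (HCBP) of $n$ if for some $i\in\{1,\dots,k\}$ the hyperplane $x_i=1/2$ splits the points $\beta_k(0),\dots,\beta_k(n-1)$ into $n_0$ points on one side and $n_1$ on the other. For $n\ge2$, $h(n)$ is the number of HCBPs of $n$, and $h(1)=0$. *)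

From mathcomp Require Import all_boot.
Set Implicit Arguments. Unset Strict Implicit. Unset Printing Implicit Defensive.

(* k = ceil(log2 n): up_log 2 n is the smallest e with n <= 2^e. *)
Definition klog (n : nat) : nat := up_log 2 n.

(* j-th coordinate (1 <= j <= k) of beta_k(m): binary digit of m of weight 2^(k-j). *)
Definition beta_coord (k m j : nat) : bool := odd (m %/ 2 ^ (k - j)).

Definition side0 (n j : nat) : nat :=
  count (fun m => ~~ beta_coord (klog n) m j) (iota 0 n).
Definition side1 (n j : nat) : nat :=
  count (fun m => beta_coord (klog n) m j) (iota 0 n).

Definition is_hcbp (n n0 n1 : nat) : bool :=
  [&& 2 <= n, n0 + n1 == n, n1 <= n0, 1 <= n1 &
   [exists j : 'I_(klog n),
      ((side0 n j.+1 == n0) && (side1 n j.+1 == n1))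
   || ((side0 n j.+1 == n1) && (side1 n j.+1 == n0))]].

Definition h (n : nat) : nat :=
  if n < 2 then 0
  else #|[set p : 'I_n.+1 * 'I_n.+1 | is_hcbp n p.1 p.2]|.

From mathcomp Require Import all_boot zify.
Set Implicit Arguments. Unset Strict Implicit. Unset Printing Implicit Defensive.

(* For the coordinate of weight 2^b, the sizes of the two sides of the
   hyperplane differ by the distance from n to the nearest multiple of
   2^(b+1).  A bipartition is determined by this difference, so h(n) is the
   number of distinct such distances for b < k.  They are nondecreasing in b,
   and the distance to 2^(f+2)Z exceeds the one to 2^(f+1)Z exactly when it
   exceeds 2^f; so h(n) is the number of f for which n is more than 2^f away
   from 2^(f+2)Z.  Doubling n doubles all distances, and the distances of 2q+1
   are the sums of those of q and q+1, which yields the recurrences. *)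

Definition mdist (n M : nat) : nat := minn (n %% M) (M - n %% M).

Lemma mdist_le n M : mdist n M <= n.
Proof. exact: leq_trans (geq_minl _ _) (leq_mod _ _). Qed.

Lemma mdist_le_half n M : (mdist n M).*2 <= M.
Proof.
rewrite /mdist; case: (posnP M) => [->|M_gt0]; first by rewrite modn0; lia.
have := ltn_pmod n M_gt0; lia.
Qed.

Lemma odd_mdist n P : 0 < P -> odd (mdist n P.*2) = odd n.
Proof.
move=> P_gt0; have : n %% P.*2 < P.*2 by rewrite ltn_pmod ?double_gt0.
by rewrite /mdist -(odd_mod n (odd_double P)); lia.
Qed.

Lemma modnS_cases q M : 0 < M ->
  (q.+1 %% M = (q %% M).+1 /\ (q %% M).+1 < M) \/ (q.+1 %% M = 0 /\ (q %% M).+1 = M).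
Proof.
move=> M_gt0; have lt_qM := ltn_pmod q M_gt0.
have e : q.+1 %% M = (q %% M).+1 %% M by rewrite -addn1 -modnDml addn1.
case: (ltngtP (q %% M).+1 M) => h; [left | lia | right].
- by rewrite e modn_small.
- by rewrite e h modnn.
Qed.

Lemma mdistS q M : 0 < M ->
  mdist q M <= (mdist q.+1 M).+1 /\ mdist q.+1 M <= (mdist q M).+1.
Proof. by move=> M_gt0; rewrite /mdist; case: (modnS_cases q M_gt0) => -[-> ?]; lia. Qed.

Lemma modn_double q M : 0 < M -> q.*2 %% M.*2 = (q %% M).*2.
Proof.
move=> M_gt0; rewrite {1}(divn_eq q M) doubleD -!mul2n mulnCA modnMDl modn_small //.
by rewrite !mul2n ltn_double ltn_pmod.
Qed.

Lemma mdist_double q M : 0 < M -> mdist q.*2 M.*2 = (mdist q M).*2.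
Proof. by move=> M_gt0; rewrite /mdist modn_double //; lia. Qed.

Lemma mdist_double_succ q P : 0 < P ->
  mdist q.*2.+1 P.*2.*2 = mdist q P.*2 + mdist q.+1 P.*2.
Proof.
move=> P_gt0; have M_gt0 : 0 < P.*2 by rewrite double_gt0.
have lt_qM := ltn_pmod q M_gt0.
have e : q.*2.+1 %% P.*2.*2 = (q %% P.*2).*2.+1.
  by rewrite -addn1 -modnDml modn_double // addn1 modn_small //; lia.
by rewrite /mdist e; case: (modnS_cases q M_gt0) => -[-> ?]; lia.
Qed.

Lemma mdist_step n P : 0 < P ->
  mdist n P.*2 <= mdist n P.*2.*2 /\
  (mdist n P.*2 < mdist n P.*2.*2) = (P < mdist n P.*2.*2).
Proof.
move=> P_gt0; have lt_n4P : n %% P.*2.*2 < P.*2.*2 by rewrite ltn_pmod ?double_gt0.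
rewrite /mdist; have -> : n %% P.*2 = n %% P.*2.*2 %% P.*2.
  by rewrite modn_dvdm // -[X in _ %| X]mul2n dvdn_mull.
move: (n %% P.*2.*2) lt_n4P => r lt_r4P.
case: (ltnP r P.*2) => [lt_r2P | le_2Pr].
  by rewrite modn_small //; split; [|apply/idP/idP]; lia.
rewrite -(subnKC le_2Pr) modnDl modn_small; first split; [|apply/idP/idP|]; lia.
Qed.

Lemma expn2S e : 2 ^ e.+1 = (2 ^ e).*2.
Proof. by rewrite expnS mul2n. Qed.

Lemma odd_divn n P : 0 < P -> odd (n %/ P) = (P <= n %% P.*2).
Proof.
move=> P_gt0; have lt_n2P : n %% P.*2 < P.*2 by rewrite ltn_pmod ?double_gt0.
have e : n = (n %/ P.*2).*2 * P + n %% P.*2.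
  by rewrite {1}(divn_eq n P.*2) -!mul2n mulnCA mulnA.
rewrite {1}e divnMDl // oddD odd_double /=.
case: (ltnP (n %% P.*2) P) => [lt_rP | le_Pr]; first by rewrite divn_small.
by rewrite -(subnKC le_Pr) divnDl // divnn P_gt0 divn_small //; lia.
Qed.

Lemma count_odd_divn n P : 0 < P ->
  count (fun m => odd (m %/ P)) (iota 0 n) = n %/ P.*2 * P + (n %% P.*2 - P).
Proof.
move=> P_gt0; have P2_gt0 : 0 < P.*2 by rewrite double_gt0.
elim: n => [|n IHn]; first by rewrite div0n mod0n.
rewrite -addn1 iotaD count_cat IHn /= addn0 odd_divn // addn1.
have := ltn_pmod n P2_gt0; have := divn_eq n P.*2; have := divn_eq n.+1 P.*2.
rewrite divnS // modnS; case: (P.*2 %| n.+1) => /=; lia.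
Qed.

Lemma side0_add_side1 n j : side0 n j + side1 n j = n.
Proof. by rewrite /side0 /side1 addnC count_predC size_iota. Qed.

Lemma side_gap n j :
  maxn (side0 n j) (side1 n j) - minn (side0 n j) (side1 n j) =
  mdist n (2 ^ (klog n - j).+1).
Proof.
have := side0_add_side1 n j.
rewrite [side1 n j]/side1 /beta_coord count_odd_divn ?expn_gt0 // expn2S /mdist.
have : n %% (2 ^ (klog n - j)).*2 < (2 ^ (klog n - j)).*2.
  by rewrite ltn_pmod ?double_gt0 ?expn_gt0.
have := divn_eq n (2 ^ (klog n - j)).*2; rewrite -doubleMr.
move: (2 ^ (klog n - j)) (side0 n j) => P s0.
move: (n %/ P.*2 * P) (n %% P.*2) => Q r; lia.
Qed.

Definition gaps (n : nat) : seq nat := [seq mdist n (2 ^ b.+1) | b <- iota 0 (klog n)].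

Lemma klog_bounds n : 1 < n -> 2 ^ (klog n).-1 < n <= 2 ^ klog n /\ 0 < klog n.
Proof.
by move=> n_gt1; rewrite /klog up_log_gt0 n_gt1; split; first exact: up_log_bounds.
Qed.

Lemma gap_lt n b : 1 < n -> b < klog n -> mdist n (2 ^ b.+1) < n.
Proof.
move=> n_gt1 lt_bk; have [/andP[lt_n _] _] := klog_bounds n_gt1.
have := mdist_le_half n (2 ^ b.+1); rewrite expn2S leq_double => le_gap.
by rewrite (leq_ltn_trans le_gap) // (leq_ltn_trans _ lt_n) // leq_exp2l //; lia.
Qed.

Lemma mem_gaps n v : 1 < n -> v \in gaps n -> v < n /\ odd v = odd n.
Proof.
move=> n_gt1 /mapP[b]; rewrite mem_iota => /andP[_ lt_bk] ->.
by rewrite gap_lt // expn2S odd_mdist ?expn_gt0.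
Qed.

Lemma is_hcbpE n a c : 1 < n ->
  is_hcbp n a c = [&& a + c == n, c <= a & a - c \in gaps n].
Proof.
move=> n_gt1; rewrite /is_hcbp n_gt1 /=.
case: eqP => //= ac_n; case: (boolP (c <= a)) => //= le_ca.
apply/idP/idP.
- case/andP=> _ /existsP [j side_j]; apply/mapP; exists (klog n - j.+1).
    by rewrite mem_iota /=; have := ltn_ord j; lia.
  rewrite -side_gap; have := side0_add_side1 n j.+1.
  by case/orP: side_j => /andP[/eqP-> /eqP->]; lia.
- case/mapP=> b; rewrite mem_iota /= => lt_bk gap_b.
  have lt_jk : klog n - b.+1 < klog n by lia.
  have := gap_lt n_gt1 lt_bk; rewrite -gap_b => lt_gap.
  apply/andP; split; first by lia.
  apply/existsP; exists (Ordinal lt_jk).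
  have := side_gap n (klog n - b.+1).+1; have := side0_add_side1 n (klog n - b.+1).+1.
  have -> : klog n - (klog n - b.+1).+1 = b by lia.
  by rewrite /= -gap_b; case: leqP; lia.
Qed.

Lemma card_ord_mem N (s : seq nat) : all (fun v => v < N) s ->
  #|[set x : 'I_N | val x \in s]| = size (undup s).
Proof.
move=> /allP lt_sN; rewrite cardE -(size_map val); apply/perm_size/uniq_perm.
- by rewrite (map_inj_uniq val_inj) enum_uniq.
- exact: undup_uniq.
move=> v; rewrite mem_undup; apply/mapP/idP => [[x] | s_v].
  by rewrite mem_enum inE => ? ->.
by exists (Ordinal (lt_sN v s_v)); rewrite ?mem_enum ?inE.
Qed.

Lemma h_gaps n : 1 < n -> h n = size (undup (gaps n)).
Proof.
move=> n_gt1; rewrite /h ltnNge n_gt1 /=.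
set A := [set p | _]; pose gap (p : 'I_n.+1 * 'I_n.+1) : 'I_n.+1 := inord (p.1 - p.2).
have A_E p : (p \in A) = [&& p.1 + p.2 == n, p.2 <= p.1 & p.1 - p.2 \in gaps n].
  by rewrite inE is_hcbpE.
rewrite -(card_in_imset (f := gap)); last first.
  move=> [a c] [a' c'] /[!A_E] /= /and3P[/eqP ac_n le_ca _] /and3P[/eqP ac_n' le_ca' _].
  move/(congr1 (@nat_of_ord _)); rewrite /gap /= !inordK; try lia.
  by move=> e; congr (_, _); apply: val_inj => /=; lia.
rewrite -(card_ord_mem (N := n.+1)); last by apply/allP => v /(mem_gaps n_gt1) [? _]; lia.
apply: eq_card => x; rewrite [RHS]inE; apply/imsetP/idP.
- case=> -[a c] /[!A_E] /= /and3P[/eqP ac_n le_ca gap_ac] ->.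
  by rewrite /gap inordK //=; lia.
- move=> gap_x; have [lt_xn odd_x] : x < n /\ odd x = odd n := mem_gaps n_gt1 gap_x.
  have half_lt : (n - x)./2 < n.+1 by lia.
  have sum_lt : x + (n - x)./2 < n.+1 by lia.
  exists (Ordinal sum_lt, Ordinal half_lt).
    by rewrite A_E /= addnK gap_x andbT; lia.
  by apply: ord_inj; rewrite /gap /= inordK addnK.
Qed.

Definition jump (n f : nat) : bool := 2 ^ f < mdist n (2 ^ f.+2).

Definition jumps (n : nat) : nat := count (jump n) (iota 0 n).

Lemma jump_step n f :
  mdist n (2 ^ f.+1) <= mdist n (2 ^ f.+2) /\
  (mdist n (2 ^ f.+1) < mdist n (2 ^ f.+2)) = jump n f.
Proof. by rewrite /jump !expn2S; apply: mdist_step; rewrite expn_gt0. Qed.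

Lemma size_undup_nondecreasing (f : nat -> nat) m K : (forall i, f i <= f i.+1) ->
  size (undup [seq f i | i <- iota m K.+1]) =
  (count (fun i => f i < f i.+1) (iota m K)).+1.
Proof.
move=> f_homo; have f_mono := homo_leq leqnn leq_trans f_homo.
elim: K m => [|K IHK] m //.
rewrite -[iota m K.+2]/(m :: iota m.+1 K.+1) -[iota m K.+1]/(m :: iota m.+1 K).
rewrite map_cons [count _ _]/= -addnS -IHK -[undup _]/(if _ then _ else _).
have [lt_f | le_f] := ltnP (f m) (f m.+1).
  suff /negbTE-> : f m \notin [seq f i | i <- iota m.+1 K.+1] by [].
  apply/mapP => -[i]; rewrite mem_iota => /andP[lt_mi _] f_eq.
  by have := f_mono _ _ lt_mi; rewrite -f_eq leqNgt lt_f.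
suff -> : f m \in [seq f i | i <- iota m.+1 K.+1] by [].
apply/mapP; exists m.+1; first by rewrite mem_iota; lia.
by apply/eqP; rewrite eqn_leq le_f f_homo.
Qed.

Lemma klog_le n : klog n <= n.
Proof. by apply: up_log_min => //; apply: ltnW; apply: ltn_expl. Qed.

Lemma jump_klog n f : klog n <= f -> jump n f = false.
Proof.
move=> le_kf; apply/negbTE; rewrite -leqNgt (leq_trans (mdist_le _ _)) //.
by rewrite (leq_trans (@up_logP 2 n isT)) // leq_exp2l.
Qed.

Lemma jumps_ext n K : klog n <= K -> count (jump n) (iota 0 K) = jumps n.
Proof.
suff count_klog K' :
    klog n <= K' -> count (jump n) (iota 0 K') = count (jump n) (iota 0 (klog n)).
  by move=> le_kK; rewrite /jumps (count_klog _ le_kK) (count_klog _ (klog_le n)).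
move=> le_kK'; rewrite -(subnKC le_kK') iotaD count_cat.
rewrite (eq_in_count (a2 := pred0) (s := iota (0 + klog n) _)) ?count_pred0 ?addn0 //.
move=> f; rewrite mem_iota => /andP[le_kf _].
by rewrite jump_klog.
Qed.

Lemma size_undup_gaps n : 1 < n -> size (undup (gaps n)) = jumps n.
Proof.
move=> n_gt1; have [/andP[lt_n le_n] k_gt0] := klog_bounds n_gt1.
rewrite -(jumps_ext (leqnn _)) /gaps.
move: k_gt0 lt_n le_n; case: (klog n) => [|k] // _ lt_n le_n.
rewrite (size_undup_nondecreasing (f := fun b => mdist n (2 ^ b.+1))); last first.
  by move=> b; case: (jump_step n b).
rewrite (eq_count (a2 := jump n)); last by move=> b; case: (jump_step n b).
(* The jump at f = klog n - 1, where the distance reaches n itself, supplies the .+1. *)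
rewrite -(addn1 k) iotaD count_cat /= add0n addn0 -addn1; congr (_ + _).
rewrite /jump /mdist modn_small; last by rewrite (leq_ltn_trans le_n) // ltn_exp2l.
by move: lt_n le_n; rewrite /= !expnS; lia.
Qed.

Lemma h_jumps n : 1 < n -> h n = jumps n.
Proof. by move=> n_gt1; rewrite h_gaps // size_undup_gaps. Qed.

Lemma jump0 n : jump n 0 = (n %% 4 == 2).
Proof. by rewrite /jump /mdist; apply/idP/idP; lia. Qed.

Lemma jump1 n : jump n 1 = (2 < n %% 8 < 6).
Proof. by rewrite /jump /mdist; apply/idP/idP; lia. Qed.

Lemma jump_double q f : jump q.*2 f.+1 = jump q f.
Proof. by rewrite /jump (expn2S f.+2) mdist_double ?expn_gt0 // expn2S ltn_double. Qed.

Lemma jump_double_succ q p f : odd p -> (p = q \/ p = q.+1) ->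
  jump q.*2.+1 f.+2 = jump p f.+1.
Proof.
move=> odd_p p_q; have P4_gt0 : 0 < (2 ^ f).*2.*2 by rewrite !double_gt0 expn_gt0.
have P8_gt0 : 0 < (2 ^ f).*2.*2.*2 by rewrite double_gt0.
rewrite /jump (expn2S f.+3) (expn2S f.+2) mdist_double_succ ?expn_gt0 // !expn2S.
have := mdistS q P8_gt0; have := odd_mdist p P4_gt0; rewrite odd_p.
move: (2 ^ f) P4_gt0 => P P4_gt0.
by case: p_q => -> odd_a [? ?]; apply/idP/idP; lia.
Qed.

Lemma count_iota0S (a : pred nat) K :
  count a (iota 0 K.+1) = a 0 + count (fun f => a f.+1) (iota 0 K).
Proof. by rewrite /= -[1]addn0 iotaDl count_map. Qed.

Lemma jumps_double q : 0 < q -> jumps q.*2 = odd q + jumps q.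
Proof.
move=> q_gt0; rewrite [jumps _]/jumps.
have -> : iota 0 q.*2 = iota 0 q.*2.-1.+1 by rewrite prednK ?double_gt0.
rewrite count_iota0S (eq_count (jump_double q)) jumps_ext; last by have := klog_le q; lia.
by rewrite jump0; congr (nat_of_bool _ + _); apply/eqP/idP; lia.
Qed.

Lemma jumps_double_succ q p : 0 < q -> odd p -> (p = q \/ p = q.+1) ->
  jumps q.*2.+1 = jump q.*2.+1 1 + jumps p.
Proof.
move=> q_gt0 odd_p p_q; rewrite [jumps q.*2.+1]/jumps.
have -> : iota 0 q.*2.+1 = iota 0 q.*2.-1.+2 by rewrite prednK ?double_gt0.
rewrite !count_iota0S jump0 (eq_count (fun f => jump_double_succ f odd_p p_q)).
rewrite -(jumps_ext (K := q.*2.-1.+1)); last by have := klog_le p; lia.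
rewrite count_iota0S jump0.
have [-> ->] : (q.*2.+1 %% 4 == 2) = false /\ (p %% 4 == 2) = false by split; lia.
by rewrite add0n.
Qed.

Theorem corollary21 :
  (h 1 = 0 /\ h 2 = 1 /\ h 3 = 1 /\ h 4 = 1 /\ h 5 = 2 /\ h 6 = 2 /\
   h 7 = 1 /\ h 8 = 1) /\
  (forall n : nat, 8 < n ->
     (n %% 4 = 0 -> h n = h (n %/ 2)) /\
     (n %% 4 = 2 -> h n = (h (n %/ 2)).+1) /\
     (n %% 8 = 1 -> h n = h ((n + 1) %/ 2)) /\
     (n %% 8 = 3 -> h n = (h ((n - 1) %/ 2)).+1) /\
     (n %% 8 = 5 -> h n = (h ((n + 1) %/ 2)).+1) /\
     (n %% 8 = 7 -> h n = h ((n - 1) %/ 2))).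
Proof.
split; first by rewrite [h 1]/h !h_jumps.
move=> n lt_8n; set q := n %/ 2.
have q_gt1 : 1 < q by lia.
have [n_even | n_odd] : n = q.*2 \/ n = q.*2.+1 by lia.
- have even_step : h n = odd q + h q.
    by rewrite !h_jumps ?n_even ?jumps_double //; lia.
  by rewrite even_step; repeat split; lia.
have odd_step p : odd p -> (p = q \/ p = q.+1) -> h n = (2 < n %% 8 < 6) + h p.
  move=> odd_p p_q.
  by rewrite !h_jumps ?n_odd ?(jumps_double_succ _ odd_p p_q) ?jump1 //; lia.
do 2 (split; first lia).
split; [|split; [|split]] => n_mod.
- by rewrite (odd_step ((n + 1) %/ 2)); lia.
- by rewrite (odd_step ((n - 1) %/ 2)); lia.
- by rewrite (odd_step ((n + 1) %/ 2)); lia.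
- by rewrite (odd_step ((n - 1) %/ 2)); lia.
Qed.
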